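(* Let $\lambda>0$ and $\gamma>0$. Let $\mathcal{F}_p^\lambda(r)=\{F_\lambda(x):x\in B_p(r)\}$. Let $$B_p^\gamma(r)=\{x\in B_p(r):\|x(\xi)\|\le\gamma\text{ for every }\xi\in\Omega\},$$ and let $\mathcal{F}_p^{\lambda,\gamma}(r)=\{F_\lambda(x):x\in B_p^\gamma(r)\}$. Then $$h_q\big(\mathcal{F}_p^\lambda(r),\mathcal{F}_p^{\lambda,\gamma}(r)\big)\le\frac{2r^p[\mu(\Omega)]^{1/q}M(\lambda)}{\gamma^{p-1}}.$$
   Context: Let $k,m,n\ge 1$ be integers and let $\Omega\subset\mathbb{R}^k$ be a compact set. Let $\mu$ denote Lebesgue measure. Let $p>1$, let $q$ satisfy $1/p+1/q=1$, and let $r>0$. $\|\cdot\|$ denotes the Euclidean norm on vectors and the Euclidean (Frobenius) norm on $m\times n$ matrices. $L_p(\Omega;\mathbb{R}^n)$ is the space of Lebesgue measurable $x:\Omega\to\mathbb{R}^n$ with $\|x\|_p=(\int_\Omega\|x(s)\|^p\,ds)^{1/p}<\infty$, and $B_p(r)=\{x\in L_p(\Omega;\mathbb{R}^n):\|x\|_p\le r\}$. $K_\lambda:\Omega\times\Omega\to\mathbb{R}^{m\times n}$ is a continuous function. Set $F_\lambda(x)(\xi)=\int_\Omega K_\lambda(\xi,s)x(s)\,ds$ and $M(\lambda)=\max\{\|K_\lambda(\xi,s)\|:(\xi,s)\in\Omega\times\Omega\}$. $h_q(U,V)=\max\{\sup_{u\in U}\inf_{v\in V}\|u-v\|_q,\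 \sup_{v\in V}\inf_{u\in U}\|u-v\|_q\}$ is the Hausdorff distance in $L_q(\Omega;\mathbb{R}^m)$. *)

From HB Require Import structures.
From mathcomp Require Import all_boot all_order all_algebra.
From mathcomp Require Import all_classical all_reals all_analysis.
Set Implicit Arguments. Unset Strict Implicit. Unset Printing Implicit Defensive.
Import Order.TTheory GRing.Theory Num.Theory.
Import numFieldNormedType.Exports.
Local Open Scope classical_set_scope.
Local Open Scope ring_scope.

(* Euclidean (Frobenius) norm of a real matrix; for column vectors
   'cV_n = 'M_(n,1) this is the Euclidean norm of R^n. *)
Definition fro (R : realType) (a b : nat) (A : 'M[R]_(a, b)) : R :=
  Num.sqrt (\sum_(i < a) \sum_(j < b) A i j ^+ 2).

Definition Rk (R : realType) (k : nat) := g_sigma_algebraType (@open 'rV[R]_k).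

(* mu is Lebesgue measure on the Borel sets of R^k: the measure of every
   half-open box is the product of its side lengths (this determines the
   measure uniquely on Borel sets). *)
Definition is_lebesgue_Rk (R : realType) (k : nat)
    (mu : {measure set (Rk R k) -> \bar R}) : Prop :=
  forall a b : 'rV[R]_k, (forall i, a 0 i <= b 0 i) ->
    mu ([set x : 'rV[R]_k | forall i, a 0 i <= x 0 i < b 0 i] : set (Rk R k))
    = (\prod_(i < k) (b 0 i - a 0 i))%:E.

Definition meas_on (R : realType) (k n : nat) (Om : set 'rV[R]_k)
    (x : 'rV[R]_k -> 'cV[R]_n) : Prop :=
  forall i : 'I_n, measurable_fun (Om : set (Rk R k)) (fun s => x s i 0).

Definition Lpnorm (R : realType) (k n : nat) (mu : {measure set (Rk R k) -> \bar R})
    (Om : set 'rV[R]_k) (p : R) (x : 'rV[R]_k -> 'cV[R]_n) : \bar R :=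
  poweR (\int[mu]_(s in (Om : set (Rk R k))) ((fro (x s)) `^ p)%:E) p^-1.

Definition Bp (R : realType) (k n : nat) (mu : {measure set (Rk R k) -> \bar R})
    (Om : set 'rV[R]_k) (p r : R) : set ('rV[R]_k -> 'cV[R]_n) :=
  [set x | meas_on Om x /\ (Lpnorm mu Om p x <= r%:E)%E].

Definition Bpg (R : realType) (k n : nat) (mu : {measure set (Rk R k) -> \bar R})
    (Om : set 'rV[R]_k) (p r g : R) : set ('rV[R]_k -> 'cV[R]_n) :=
  [set x | Bp mu Om p r x /\ forall xi, Om xi -> fro (x xi) <= g].

Definition Fop (R : realType) (k m n : nat) (mu : {measure set (Rk R k) -> \bar R})
    (Om : set 'rV[R]_k) (K : 'rV[R]_k -> 'rV[R]_k -> 'M[R]_(m, n))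
    (x : 'rV[R]_k -> 'cV[R]_n) : 'rV[R]_k -> 'cV[R]_m :=
  fun xi => \col_(i < m)
    (\int[mu]_(s in (Om : set (Rk R k))) ((K xi s *m x s) i 0)).

(* M = max of ||K(xi,s)|| over Omega x Omega (a sup, attained when Omega
   is nonempty by compactness and continuity). *)
Definition Mmax (R : realType) (k m n : nat) (Om : set 'rV[R]_k)
    (K : 'rV[R]_k -> 'rV[R]_k -> 'M[R]_(m, n)) : R :=
  sup [set fro (K xs.1 xs.2) | xs in [set xs | Om xs.1 /\ Om xs.2]].

Definition hausdorff_q (R : realType) (k m : nat) (mu : {measure set (Rk R k) -> \bar R})
    (Om : set 'rV[R]_k) (q : R) (U V : set ('rV[R]_k -> 'cV[R]_m)) : \bar R :=
  maxe
    (ereal_sup [set ereal_inf [set Lpnorm mu Om q (fun s => u s - v s) | v in V] | u in U])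
    (ereal_sup [set ereal_inf [set Lpnorm mu Om q (fun s => u s - v s) | u in U] | v in V]).

(* Given x in B_p(r), let y = trunc_gam(x) be x cut off where
   |x| > gam, and w = x - y.  Then y lies in B_p^gam(r), and pointwise
   |w| <= |x|^p / gam^(p-1), so for every xi in Omega
     |F(x)(xi) - F(y)(xi)| = |F(w)(xi)| <= M int |x|^p / gam^(p-1)
                                          <= M r^p / gam^(p-1).
   A pointwise bound c on Omega gives the L_q bound c mu(Omega)^(1/q); since
   moreover F(B_p^gam(r)) is contained in F(B_p(r)), the Hausdorff distance
   is at most M r^p mu(Omega)^(1/q) / gam^(p-1), half the stated bound. *)

From HB Require Import structures.
From mathcomp Require Import all_boot all_order all_algebra.
From mathcomp Require Import all_classical all_reals all_analysis.
From mathcomp Require Import ring lra measurable_realfun.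
Import Order.TTheory GRing.Theory Num.Theory.
Import numFieldNormedType.Exports.
Set Implicit Arguments. Unset Strict Implicit. Unset Printing Implicit Defensive.
Local Open Scope classical_set_scope.
Local Open Scope ring_scope.

Section FrobeniusNorm.
Variable R : realType.

Lemma sum_sqr_ge0 (I : finType) (f : I -> R) : 0 <= \sum_i f i ^+ 2.
Proof. by apply: sumr_ge0 => i _; exact: sqr_ge0. Qed.

Lemma fro_ge0 a b (A : 'M[R]_(a, b)) : 0 <= fro A.
Proof. exact: sqrtr_ge0. Qed.

Lemma fro0 a b : fro (0 : 'M[R]_(a, b)) = 0.
Proof.
by rewrite /fro big1 ?sqrtr0 // => i _; rewrite big1 // => j _; rewrite mxE expr0n.
Qed.

Lemma fro_cV a (u : 'cV[R]_a) : fro u = Num.sqrt (\sum_i u i 0 ^+ 2).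
Proof. by congr Num.sqrt; apply: eq_bigr => i _; rewrite big_ord1. Qed.

(* Cauchy-Schwarz for finite sums, squared form: with t = S/A the
   nonnegative quantity sum (a_i t - b_i)^2 equals B - S^2/A. *)
Lemma cauchy_schwarz_sqr (I : finType) (a b : I -> R) :
  (\sum_i a i * b i) ^+ 2 <= (\sum_i a i ^+ 2) * (\sum_i b i ^+ 2).
Proof.
set S := \sum_i a i * b i; set A := \sum_i a i ^+ 2; set B := \sum_i b i ^+ 2.
have B0 : 0 <= B := sum_sqr_ge0 b.
have [A0|Aneq0] := eqVneq A 0.
  have a0 i : a i = 0.
    by apply/eqP; rewrite -sqrf_eq0; apply/eqP/(psumr_eq0P _ A0) => // j _; exact: sqr_ge0.
  by rewrite /S big1 ?expr0n ?A0 ?mul0r // => i _; rewrite a0 mul0r.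
set t := S / A.
have tA : t * A = S by rewrite /t divfK.
have expand : \sum_i (a i * t - b i) ^+ 2 = t * (t * A) - 2 * t * S + B.
  rewrite /A /S /B !mulr_sumr -!sumrB -big_split /=.
  by apply: eq_bigr => i _; ring.
have := sum_sqr_ge0 (fun i => a i * t - b i); rewrite expand tA => tS.
have A0 : 0 < A by rewrite lt_def Aneq0 sum_sqr_ge0.
have -> : S ^+ 2 = t * S * A by rewrite expr2 -{1}tA; ring.
by rewrite [A * B]mulrC; apply: ler_wpM2r; [exact: ltW | lra].
Qed.

Lemma cauchy_schwarz (I : finType) (a b : I -> R) :
  \sum_i a i * b i <= Num.sqrt (\sum_i a i ^+ 2) * Num.sqrt (\sum_i b i ^+ 2).
Proof.
rewrite -sqrtrM ?sum_sqr_ge0 //; apply: le_trans (ler_norm _) _.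
by rewrite -sqrtr_sqr ler_sqrt ?cauchy_schwarz_sqr // mulr_ge0 ?sum_sqr_ge0.
Qed.

Lemma dot_le_fro n (u v : 'cV[R]_n) : \sum_i u i 0 * v i 0 <= fro u * fro v.
Proof. by rewrite !fro_cV; exact: cauchy_schwarz. Qed.

Lemma coord_le_fro n (v : 'cV[R]_n) i : `|v i 0| <= fro v.
Proof.
rewrite fro_cV -sqrtr_sqr ler_sqrt ?sum_sqr_ge0 //.
rewrite (bigD1 i) //= lerDl.
by apply: sumr_ge0 => j _; exact: sqr_ge0.
Qed.

(* The Frobenius norm is submultiplicative on matrix-vector products:
   apply Cauchy-Schwarz to each row of A. *)
Lemma fro_mulmx_le m n (A : 'M[R]_(m, n)) (w : 'cV[R]_n) :
  fro (A *m w) <= fro A * fro w.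
Proof.
have sum2_ge0 : 0 <= \sum_i \sum_j A i j ^+ 2.
  by apply: sumr_ge0 => i _; exact: sum_sqr_ge0.
have -> : fro A * fro w = Num.sqrt ((\sum_i \sum_j A i j ^+ 2) * \sum_j w j 0 ^+ 2).
  by rewrite sqrtrM ?fro_cV.
rewrite fro_cV ler_sqrt ?mulr_ge0 ?sum_sqr_ge0 //.
by rewrite mulr_suml; apply: ler_sum => i _; rewrite mxE; exact: cauchy_schwarz_sqr.
Qed.

Lemma fro_le_entrywise a b (B : 'M[R]_(a, b)) c :
  (forall i j, `|B i j| <= c) ->
  fro B <= Num.sqrt (\sum_(i < a) \sum_(j < b) c ^+ 2).
Proof.
move=> Bc; rewrite ler_sqrt; last by apply: sumr_ge0 => i _; exact: sum_sqr_ge0.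
apply: ler_sum => i _; apply: ler_sum => j _.
by rewrite -real_normK ?num_real // lerXn2r ?nnegrE // (le_trans _ (Bc i j)).
Qed.

End FrobeniusNorm.

Section BorelSetsOfRk.
Variables (R : realType) (k : nat).

Lemma closed_measurable_Rk (U : set 'rV[R]_k) :
  closed U -> measurable (U : set (Rk R k)).
Proof.
move=> cU; rewrite -(setCK U); apply: measurableC; apply: sub_sigma_algebra.
exact: closed_openC.
Qed.

Lemma compact_measurable_Rk (U : set 'rV[R]_k) :
  compact U -> measurable (U : set (Rk R k)).
Proof. by move=> /compact_closed cU; apply: closed_measurable_Rk; exact: cU. Qed.

(* A function jointly continuous on D x D has Borel-measurable sections
   s |-> g (a, s) on D: the preimage of an open interval is D intersected
   with the preimage of an open set under the continuous map s |-> (a, s). *)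
Lemma measurable_section (D : set 'rV[R]_k) (g : 'rV[R]_k * 'rV[R]_k -> R) a :
  D a -> measurable (D : set (Rk R k)) -> {within D `*` D, continuous g} ->
  measurable_fun (D : set (Rk R k)) (fun s => g (a, s)).
Proof.
move=> Da mD cg; apply: (measurability _ (RGenOpens.measurableE R)).
move=> _ [_ [b [c ->] <-]].
have /continuousP/(_ _ (@interval_open _ (BRight b) (BLeft c) erefl erefl)) := cg.
move=> /open_subspaceP [V oV VD].
have -> : D `&` (fun s => g (a, s)) @^-1` `]b, c[%classic =
          D `&` (fun s => (a, s)) @^-1` V.
  apply/seteqP; split => s [Ds gs]; split => //.
  - have : (g @^-1` `]b, c[%classic `&` D `*` D) (a, s) by [].
    by rewrite -VD => -[].
  - have : (V `&` D `*` D) (a, s) by [].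
    by rewrite VD => -[].
apply: measurableI => //; apply: sub_sigma_algebra; apply: open_comp oV => s _.
exact: (@cvg_pair _ _ _ (nbhs s) _ _ _ _ _ (fun=> a) id (cvg_cst a) cvg_id).
Qed.

End BorelSetsOfRk.

Section Compactness.
Variable R : realType.

Lemma compact_entries_bounded m n (A : set 'M[R]_(m, n)) :
  compact A -> exists c, 0 <= c /\ forall x, A x -> forall i j, `|x i j| <= c.
Proof.
move=> /compact_bounded [M [_ HM]]; exists (`|M| + 1); split => [|x Ax i j].
  by rewrite addr_ge0.
have entry_le : `|x i j| <= `|x|.
  rewrite (_ : `|x| = mx_norm x) // mx_normrE.
  exact: (le_bigmax _ (fun ij : 'I_m * 'I_n => `|x ij.1 ij.2|) (i, j)).
apply: le_trans entry_le _; apply: HM => //.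
by apply: le_lt_trans (real_ler_norm _) _; rewrite ?ltrDl // num_real.
Qed.

(* Lebesgue measure of a compact set is finite: the set lies in a box. *)
Lemma compact_lebesgue_finite k (mu : {measure set (Rk R k) -> \bar R})
    (Om : set 'rV[R]_k) :
  is_lebesgue_Rk mu -> compact Om -> (mu (Om : set (Rk R k)) < +oo)%E.
Proof.
move=> leb cOm; have [c [c0 Hc]] := compact_entries_bounded cOm.
pose a : 'rV[R]_k := const_mx (- c); pose b : 'rV[R]_k := const_mx (c + 1).
pose box := [set x : 'rV[R]_k | forall i, a 0 i <= x 0 i < b 0 i].
have half_open i (t : R) : measurable ([set x : 'rV[R]_k | x 0 i < t] : set (Rk R k)).
  apply: sub_sigma_algebra.
  exact: (open_comp (fun x _ => @coord_continuous R 1 k 0 i x) (@open_lt R t)).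
have mbox : measurable (box : set (Rk R k)).
  have -> : box = \bigcap_(i in [set: 'I_k])
      (~` [set x : 'rV[R]_k | x 0 i < - c] `&` [set x | x 0 i < c + 1]).
    apply/seteqP; split => x.
      move=> Hx i _; have := Hx i; rewrite !mxE => /andP[h1 h2].
      by split => //=; apply/negP; rewrite -leNgt.
    move=> Hx i; have [/= h1 h2] := Hx i I; rewrite !mxE h2 andbT leNgt.
    exact/negP.
  apply: fin_bigcap_measurable; first exact: finite_finset.
  by move=> i _; apply: measurableI; [apply: measurableC|]; exact: half_open.
have Om_box : Om `<=` box.
  move=> x Ox i; have := Hc x Ox 0 i; rewrite !mxE ler_norml => /andP[h1 h2].
  by rewrite h1 /=; lra.
have ab i : a 0 i <= b 0 i by rewrite !mxE; lra.
have : (mu (Om : set (Rk R k)) <= mu (box : set (Rk R k)))%E.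
  by apply: le_measure => //; rewrite inE //; exact: compact_measurable_Rk.
by move=> /le_lt_trans; apply; rewrite leb // ltry.
Qed.

Lemma Mmax_bound k m n (Om : set 'rV[R]_k) (G : 'rV[R]_k -> 'rV[R]_k -> 'M[R]_(m, n)) :
  compact Om ->
  {within [set xs | Om xs.1 /\ Om xs.2], continuous (fun xs => G xs.1 xs.2)} ->
  (forall a s, Om a -> Om s -> fro (G a s) <= Mmax Om G) /\ 0 <= Mmax Om G.
Proof.
move=> cOm cG.
have /compact_entries_bounded [c [_ Hc]] := continuous_compact cG (compact_setX cOm cOm).
have ub : has_ubound [set fro (G xs.1 xs.2) | xs in [set xs | Om xs.1 /\ Om xs.2]].
  exists (Num.sqrt (\sum_(i < m) \sum_(j < n) c ^+ 2)) => _ [xs Oxs <-].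
  by apply: fro_le_entrywise => i j; apply: Hc; exists xs.
have bound a s : Om a -> Om s -> fro (G a s) <= Mmax Om G.
  by move=> Oa Os; apply: ub_le_sup => //; exists (a, s).
split => //; have [[a Oa]|noOm] := pselect (exists a, Om a).
  exact: le_trans (fro_ge0 _) (bound a a Oa Oa).
rewrite /Mmax (_ : [set _ | _ in _] = set0) ?sup0 //.
by apply/seteqP; split => // t [xs [Ox _] _]; case: noOm; exists xs.1.
Qed.

End Compactness.

Section Integration.
Context d (T : measurableType d) (R : realType) (mu : {measure set T -> \bar R}).
Variables (D : set T) (mD : measurable D).

(* Monotonicity of the integral of nonnegative functions, without any
   measurability assumption (the integral is a supremum over simple
   functions below the integrand). *)
Lemma ge0_le_integral_pointwise (f g : T -> \bar R) :
  (forall x, D x -> (0 <= f x)%E) -> (forall x, D x -> (f x <= g x)%E) ->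
  (\int[mu]_(x in D) f x <= \int[mu]_(x in D) g x)%E.
Proof.
move=> f0 fg.
have g0 x : D x -> (0 <= g x)%E by move=> Dx; exact: le_trans (f0 x Dx) (fg x Dx).
rewrite (ge0_integralE mu f0) (ge0_integralE mu g0).
apply: ereal_sup_le => _ [h hf <-]; exists h => //= t.
by apply: le_trans (hf t) _; rewrite /patch; case: ifP => // /set_mem; exact: fg.
Qed.

Lemma integrable_cst_finite (c : R) :
  (mu D < +oo)%E -> mu.-integrable D (EFin \o cst c).
Proof.
move=> Dfin; apply/integrableP; split; first exact/measurable_EFinP.
rewrite (_ : (fun x => _) = cst `|c|%:E); last by apply/funext => x.
rewrite integral_cst //; have : (mu D \is a fin_num)%E by rewrite ge0_fin_numE.
by move=> /fineK <-; rewrite -EFinM ltry.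
Qed.

Lemma integrableZl_real (f : T -> R) (c : R) :
  mu.-integrable D (EFin \o f) -> mu.-integrable D (EFin \o (fun s => c * f s)).
Proof. by move=> /(integrableZl mD c); apply: eq_integrable. Qed.

Lemma integrable_sum_real (I : Type) (s : seq I) (h : I -> T -> R) :
  (forall i, mu.-integrable D (EFin \o h i)) ->
  mu.-integrable D (EFin \o (fun x => \sum_(i <- s) h i x)).
Proof.
move=> hint; rewrite (_ : _ \o _ = fun x => \sum_(i <- s) (EFin \o h i) x)%E.
  by apply: integrable_sum => // i _; exact: hint.
by apply/funext => x /=; rewrite sumEFin.
Qed.

Lemma Rintegral_sum (I : Type) (s : seq I) (h : I -> T -> R) :
  (forall i, mu.-integrable D (EFin \o h i)) ->
  \int[mu]_(x in D) (\sum_(i <- s) h i x) = \sum_(i <- s) \int[mu]_(x in D) h i x.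
Proof.
move=> hint; elim: s => [|i s IH].
  by under eq_Rintegral do rewrite big_nil; rewrite Rintegral_cst // mul0r big_nil.
under eq_Rintegral do rewrite big_cons.
by rewrite big_cons -IH RintegralD //; exact: integrable_sum_real.
Qed.

(* With v the vector of
   integrals, |v|^2 = int <v, f> <= |v| int g by Cauchy-Schwarz. *)
Lemma fro_col_Rintegral_le n (f : T -> 'cV[R]_n) (g : T -> R) :
  (forall i, mu.-integrable D (EFin \o (fun s => f s i 0))) ->
  mu.-integrable D (EFin \o g) -> (forall s, D s -> fro (f s) <= g s) ->
  fro (\col_i \int[mu]_(s in D) f s i 0) <= \int[mu]_(s in D) g s.
Proof.
move=> fint gint fg; set v := \col_i _.
have vfint i : mu.-integrable D (EFin \o (fun s => v i 0 * f s i 0)).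
  exact: integrableZl_real.
have dot : fro v ^+ 2 = \int[mu]_(s in D) \sum_i v i 0 * f s i 0.
  rewrite Rintegral_sum // fro_cV sqr_sqrtr ?sum_sqr_ge0 //.
  by apply: eq_bigr => i _; rewrite RintegralZl // {2}/v mxE.
have : fro v ^+ 2 <= fro v * \int[mu]_(s in D) g s.
  rewrite dot -RintegralZl //; apply: le_Rintegral => //.
  - exact: integrable_sum_real.
  - exact: integrableZl_real.
  move=> s Ds; apply: le_trans (dot_le_fro _ _) _.
  by apply: ler_wpM2l; [exact: fro_ge0 | exact: fg].
have [->|vneq0] := eqVneq (fro v) 0.
  by move=> _; apply: Rintegral_ge0 => s Ds; exact: le_trans (fro_ge0 _) (fg s Ds).
have vpos : 0 < fro v by rewrite lt_def vneq0 fro_ge0.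
by rewrite expr2 ler_pM2l.
Qed.

End Integration.

Definition trunc (R : realType) n (gam : R) (v : 'cV[R]_n) : 'cV[R]_n :=
  if fro v <= gam then v else 0.

Section Truncation.
Variables (R : realType) (n : nat) (gam : R) (v : 'cV[R]_n).

Lemma fro_trunc_le : 0 <= gam -> fro (trunc gam v) <= gam.
Proof. by rewrite /trunc; case: ifP => // _; rewrite fro0. Qed.

Lemma fro_trunc_le_fro : fro (trunc gam v) <= fro v.
Proof. by rewrite /trunc; case: ifP => // _; rewrite fro0 fro_ge0. Qed.

(* The part removed by truncation is small in the p-th power sense:
   where it is nonzero, gam < |v|, so |v| = |v|^p / |v|^(p-1)
   <= |v|^p / gam^(p-1). *)
Lemma fro_trunc_tail (p : R) : 1 <= p -> 0 < gam ->
  fro (v - trunc gam v) <= fro v `^ p / gam `^ (p - 1).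
Proof.
move=> p1 gam0; rewrite /trunc; case: ifPn => [_|].
  by rewrite subrr fro0 divr_ge0 ?powR_ge0.
rewrite -ltNge subr0 => gam_lt; rewrite ler_pdivlMr ?powR_gt0 //.
rewrite -(mulr_powRB1 (fro_ge0 v) (lt_le_trans ltr01 p1)).
apply: ler_wpM2l; first exact: fro_ge0.
by apply: ge0_ler_powR; rewrite ?nnegrE ?subr_ge0 // ltW // (lt_trans gam0).
Qed.

End Truncation.

Section MeasurableVectorFunctions.
Variables (R : realType) (k : nat) (Om : set 'rV[R]_k).
Hypothesis mOm : measurable (Om : set (Rk R k)).

Lemma meas_on_sub n (x y : 'rV[R]_k -> 'cV[R]_n) :
  meas_on Om x -> meas_on Om y -> meas_on Om (fun s => x s - y s).
Proof.
move=> mx my i; rewrite (_ : (fun s => _) = fun s => x s i 0 - y s i 0).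
  exact: measurable_funB.
by apply/funext => s; rewrite !mxE.
Qed.

Lemma meas_on_mulmx m n (G : 'rV[R]_k -> 'M[R]_(m, n)) (x : 'rV[R]_k -> 'cV[R]_n) :
  (forall i j, measurable_fun (Om : set (Rk R k)) (fun s => G s i j)) ->
  meas_on Om x -> meas_on Om (fun s => G s *m x s).
Proof.
move=> mG mx i; rewrite (_ : (fun s => _) = fun s => \sum_j G s i j * x s j 0).
  by apply: measurable_sum => j; apply: measurable_funM; [exact: mG | exact: mx].
by apply/funext => s; rewrite mxE.
Qed.

Lemma measurable_fro n (x : 'rV[R]_k -> 'cV[R]_n) :
  meas_on Om x -> measurable_fun (Om : set (Rk R k)) (fun s => fro (x s)).
Proof.
move=> mx; rewrite (_ : (fun s => _) = fun s => Num.sqrt (\sum_i x s i 0 ^+ 2)).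
  apply: measurableT_comp (continuous_measurable_fun (@sqrt_continuous R)) _.
  by apply: measurable_sum => i; exact: measurable_funX.
by apply/funext => s; rewrite fro_cV.
Qed.

Lemma meas_on_trunc n (gam : R) (x : 'rV[R]_k -> 'cV[R]_n) :
  meas_on Om x -> meas_on Om (fun s => trunc gam (x s)).
Proof.
move=> mx i; rewrite (_ : (fun s => _) =
    fun s => if fro (x s) <= gam then x s i 0 else 0).
  apply: measurable_fun_if => //.
  - exact: measurable_fun_ler (measurable_fro mx) (measurable_cst _).
  - by apply: measurable_funS (mx i) => // s [].
by apply/funext => s; rewrite /trunc; case: ifP; rewrite ?mxE.
Qed.

End MeasurableVectorFunctions.

Section LpBalls.
Variables (R : realType) (k : nat) (mu : {measure set (Rk R k) -> \bar R}).
Variable Om : set 'rV[R]_k.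
Hypothesis mOm : measurable (Om : set (Rk R k)).
Hypothesis finOm : (mu (Om : set (Rk R k)) < +oo)%E.

Let mu_Om : mu (Om : set (Rk R k)) = (fine (mu (Om : set (Rk R k))))%:E.
Proof. by rewrite fineK // ge0_fin_numE. Qed.

Lemma Lpnorm_le_bound m (q c : R) (u : 'rV[R]_k -> 'cV[R]_m) :
  0 < q -> 0 <= c -> (forall s, Om s -> fro (u s) <= c) ->
  (Lpnorm mu Om q u <= (c * fine (mu (Om : set (Rk R k))) `^ q^-1)%:E)%E.
Proof.
move=> q0 c0 uc; set muf := fine _.
have muf0 : 0 <= muf by rewrite fine_ge0.
apply: (@le_trans _ _ ((c `^ q * muf)%:E `^ q^-1)%E); last first.
  by rewrite poweR_EFin powRM ?powR_ge0 // -powRrM mulfV ?gt_eqF // powRr1.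
apply: gt0_ler_poweR; first by rewrite invr_ge0 ltW.
- by rewrite in_itv /= leey andbT integral_ge0 // => s _; rewrite lee_fin powR_ge0.
- by rewrite in_itv /= leey andbT lee_fin mulr_ge0 // powR_ge0.
rewrite EFinM -mu_Om -integral_cst //.
apply: ge0_le_integral_pointwise => s Os; rewrite lee_fin ?powR_ge0 //.
by apply: ge0_ler_powR; rewrite ?nnegrE ?fro_ge0 ?(ltW q0) ?uc.
Qed.

Lemma Bp_moment n (p r : R) (x : 'rV[R]_k -> 'cV[R]_n) :
  0 < p -> Bp mu Om p r x ->
  mu.-integrable Om (EFin \o fun s => fro (x s) `^ p) /\
  \int[mu]_(s in (Om : set (Rk R k))) fro (x s) `^ p <= r `^ p.
Proof.
move=> p0 [mx xr].
set Ix := (\int[mu]_(s in (Om : set (Rk R k))) (fro (x s) `^ p)%:E)%E.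
have Ix0 : (0 <= Ix)%E by apply: integral_ge0 => s _; rewrite lee_fin powR_ge0.
have [I IxE] : exists I, Ix = I%:E.
  move: Ix0 xr; rewrite /Lpnorm -/Ix; case: Ix => [I| |] // _.
    by exists I.
  by rewrite poweRyr ?invr_neq0 ?gt_eqF.
have mxp : measurable_fun (Om : set (Rk R k)) (fun s => fro (x s) `^ p).
  exact: measurableT_comp (measurable_powR p) (measurable_fro mx).
split.
  apply/integrableP; split; first exact/measurable_EFinP.
  rewrite (_ : (fun s => _) = fun s => (fro (x s) `^ p)%:E).
    by rewrite -/Ix IxE ltry.
  by apply/funext => s; rewrite /comp gee0_abs // lee_fin powR_ge0.
move: xr; rewrite /Lpnorm -/Ix /Rintegral IxE poweR_EFin lee_fin /= => Ir.
have I0 : 0 <= I by rewrite -lee_fin -IxE.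
have r0 : 0 <= r by apply: le_trans Ir; exact: powR_ge0.
rewrite -/Ix IxE /=; have := ge0_ler_powR (ltW p0) (powR_ge0 I p^-1) r0 Ir.
by rewrite -powRrM mulVf ?gt_eqF // powRr1.
Qed.

Lemma Bp_trunc n (p r gam : R) (x : 'rV[R]_k -> 'cV[R]_n) :
  0 < p -> 0 <= gam -> Bp mu Om p r x ->
  Bpg mu Om p r gam (fun s => trunc gam (x s)).
Proof.
move=> p0 gam0 [mx xr]; split; last by move=> xi _; exact: fro_trunc_le.
split; first exact: meas_on_trunc.
apply: le_trans xr; apply: gt0_ler_poweR; first by rewrite invr_ge0 ltW.
- by rewrite in_itv /= leey andbT integral_ge0 // => s _; rewrite lee_fin powR_ge0.
- by rewrite in_itv /= leey andbT integral_ge0 // => s _; rewrite lee_fin powR_ge0.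
apply: ge0_le_integral_pointwise => s _; rewrite lee_fin ?powR_ge0 //.
by apply: ge0_ler_powR; rewrite ?nnegrE ?fro_ge0 ?(ltW p0) ?fro_trunc_le_fro.
Qed.

End LpBalls.

Section IntegralOperator.
Variables (R : realType) (k m n : nat) (mu : {measure set (Rk R k) -> \bar R}).
Variable Om : set 'rV[R]_k.
Hypothesis mOm : measurable (Om : set (Rk R k)).
Variables (K : 'rV[R]_k -> 'rV[R]_k -> 'M[R]_(m, n)) (M : R) (a : 'rV[R]_k).
Hypothesis mK : forall i j, measurable_fun (Om : set (Rk R k)) (fun s => K a s i j).
Hypothesis KM : forall s, Om s -> fro (K a s) <= M.

(* If |x| is dominated by an integrable g, the integrand of F(x)(a) is
   integrable, being dominated by M g. *)
Lemma Fop_integrable (x : 'rV[R]_k -> 'cV[R]_n) (g : 'rV[R]_k -> R) :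
  meas_on Om x -> mu.-integrable Om (EFin \o g) ->
  (forall s, Om s -> fro (x s) <= g s) ->
  forall i, mu.-integrable Om (EFin \o fun s => (K a s *m x s) i 0).
Proof.
move=> mx gint xg i.
apply: (le_integrable mOm _ _ (integrableZl_real mOm M gint)).
  by apply/measurable_EFinP; exact: (meas_on_mulmx mK mx).
move=> s Os; rewrite /comp !abse_EFin lee_fin.
apply: le_trans (coord_le_fro _ _) (le_trans (fro_mulmx_le _ _) _).
apply: le_trans (ler_norm _).
by apply: ler_pM; rewrite ?fro_ge0 ?KM ?xg.
Qed.

Lemma Fop_norm_le (x : 'rV[R]_k -> 'cV[R]_n) (g : 'rV[R]_k -> R) :
  meas_on Om x -> mu.-integrable Om (EFin \o g) ->
  (forall s, Om s -> fro (x s) <= g s) ->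
  fro (Fop mu Om K x a) <= M * \int[mu]_(s in (Om : set (Rk R k))) g s.
Proof.
move=> mx gint xg; rewrite -RintegralZl // /Fop.
apply: fro_col_Rintegral_le => //; first exact: (Fop_integrable mx gint).
  exact: integrableZl_real.
move=> s Os; apply: le_trans (fro_mulmx_le _ _) _.
by apply: ler_pM; rewrite ?fro_ge0 ?KM ?xg.
Qed.

Lemma Fop_add (x y : 'rV[R]_k -> 'cV[R]_n) :
  (forall i, mu.-integrable Om (EFin \o fun s => (K a s *m x s) i 0)) ->
  (forall i, mu.-integrable Om (EFin \o fun s => (K a s *m y s) i 0)) ->
  Fop mu Om K (fun s => x s + y s) a = Fop mu Om K x a + Fop mu Om K y a.
Proof.
move=> xint yint; apply/matrixP => i j; rewrite !mxE.
under eq_Rintegral do rewrite mulmxDr mxE.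
exact: RintegralD.
Qed.

End IntegralOperator.

(* Writing x = y + w with y the
   truncation, F(x) - F(y) = F(w) and |w| <= |x|^p / gam^(p-1). *)
Lemma Fop_trunc_close (R : realType) (k m n : nat)
    (mu : {measure set (Rk R k) -> \bar R}) (Om : set 'rV[R]_k)
    (K : 'rV[R]_k -> 'rV[R]_k -> 'M[R]_(m, n)) (M p r gam : R)
    (x : 'rV[R]_k -> 'cV[R]_n) :
  measurable (Om : set (Rk R k)) -> (mu (Om : set (Rk R k)) < +oo)%E ->
  1 < p -> 0 < gam -> 0 <= M ->
  (forall a, Om a -> forall i j, measurable_fun (Om : set (Rk R k)) (fun s => K a s i j)) ->
  (forall a s, Om a -> Om s -> fro (K a s) <= M) ->
  Bp mu Om p r x ->
  forall a, Om a ->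
    fro (Fop mu Om K x a - Fop mu Om K (fun s => trunc gam (x s)) a)
      <= M * r `^ p / gam `^ (p - 1).
Proof.
move=> mOm finOm p1 gam0 M0 mK KM xB a Oa.
have p0 : 0 < p := lt_trans ltr01 p1.
have [xint xr] := Bp_moment p0 xB.
have mx : meas_on Om x by case: xB.
set y := fun s => trunc gam (x s); set w := fun s => x s - y s.
have my : meas_on Om y by exact: meas_on_trunc.
set C := (gam `^ (p - 1))^-1.
have gint : mu.-integrable Om (EFin \o fun s => C * fro (x s) `^ p).
  exact: integrableZl_real.
have w_tail s : Om s -> fro (w s) <= C * fro (x s) `^ p.
  by move=> _; rewrite mulrC; apply: fro_trunc_tail => //; exact: ltW.
have y_gam s : Om s -> fro (y s) <= cst gam s by move=> _; exact/fro_trunc_le/ltW.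
have KMa s : Om s -> fro (K a s) <= M := KM a s Oa.
have yint := Fop_integrable mOm (mK a Oa) KMa my (integrable_cst_finite mOm gam finOm) y_gam.
have wint := Fop_integrable mOm (mK a Oa) KMa (meas_on_sub mx my) gint w_tail.
have -> : x = fun s => y s + w s by apply/funext => s; rewrite addrC subrK.
rewrite Fop_add // addrAC subrr add0r.
apply: le_trans (Fop_norm_le mOm (mK a Oa) KMa (meas_on_sub mx my) gint w_tail) _.
have -> : M * r `^ p / gam `^ (p - 1) = M * (C * r `^ p) by rewrite /C; ring.
rewrite RintegralZl //; apply: ler_wpM2l => //.
by apply: ler_wpM2l; rewrite // invr_ge0 powR_ge0.
Qed.

Lemma hausdorff_q_le (R : realType) (k m : nat)
    (mu : {measure set (Rk R k) -> \bar R}) (Om : set 'rV[R]_k) (q B : R)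
    (U V : set ('rV[R]_k -> 'cV[R]_m)) :
  0 < q -> 0 <= B -> V `<=` U ->
  (forall u, U u -> exists2 v, V v & (Lpnorm mu Om q (fun s => (u s - v s)%R) <= B%:E)%E) ->
  (hausdorff_q mu Om q U V <= B%:E)%E.
Proof.
move=> q0 B0 VU Uclose; rewrite /hausdorff_q ge_max; apply/andP; split.
  apply: ge_ereal_sup => _ [u Uu <-]; have [v Vv uv] := Uclose u Uu.
  by apply: le_trans (ereal_inf_lbound _) uv; exists v.
apply: ge_ereal_sup => _ [v Vv <-]; apply: le_trans (ereal_inf_lbound _) _.
  by exists v => //; exact: VU.
rewrite /Lpnorm; under eq_integral do rewrite subrr fro0 powR0 ?gt_eqF //.
by rewrite integral0 poweR0r ?invr_eq0 ?gt_eqF // lee_fin.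
Qed.

Unset Implicit Arguments.

Theorem mainTheorem4 (R : realType) (k m n : nat)
    (mu : {measure set (Rk R k) -> \bar R}) (Om : set 'rV[R]_k)
    (p q r : R) (K : R -> 'rV[R]_k -> 'rV[R]_k -> 'M[R]_(m, n)) (lam gam : R) :
  (0 < k)%N -> (0 < m)%N -> (0 < n)%N ->
  is_lebesgue_Rk mu -> compact Om ->
  1 < p -> p^-1 + q^-1 = 1 -> 0 < r ->
  {within [set xs | Om xs.1 /\ Om xs.2], continuous (fun xs => K lam xs.1 xs.2)} ->
  0 < lam -> 0 < gam ->
  (hausdorff_q mu Om q
     [set Fop mu Om (K lam) x | x in Bp mu Om p r]
     [set Fop mu Om (K lam) x | x in Bpg mu Om p r gam]
   <= (2 * r `^ p * (fine (mu (Om : set (Rk R k)))) `^ q^-1 * Mmax Om (K lam)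
        / gam `^ (p - 1))%:E)%E.
Proof.
move=> _ _ _ leb cOm p1 pq _ cK _ gam0.
have mOm := compact_measurable_Rk cOm.
have finOm := compact_lebesgue_finite leb cOm.
have [KM M0] := Mmax_bound cOm cK.
have mK a : Om a -> forall i j, measurable_fun (Om : set (Rk R k)) (fun s => K lam a s i j).
  move=> Oa i j; apply: (measurable_section (g := fun xs => K lam xs.1 xs.2 i j)) => // xs.
  exact: continuous_comp (cK xs) (@coord_continuous R m n i j _).
have q0 : 0 < q.
  have -> : q = (1 - p^-1)^-1 by rewrite -pq addrC addKr invrK.
  by rewrite invr_gt0 subr_gt0 invf_lt1 // (lt_trans ltr01).
set c := Mmax Om (K lam) * r `^ p / gam `^ (p - 1).
have c0 : 0 <= c by rewrite divr_ge0 ?mulr_ge0 ?powR_ge0.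
set muq := fine (mu (Om : set (Rk R k))) `^ q^-1.
have muq0 : 0 <= muq by rewrite powR_ge0.
apply: le_trans (_ : (c * muq)%:E <= _)%E; last first.
  rewrite lee_fin (_ : _ / _ = 2 * (c * muq)); last by rewrite /c /muq; ring.
  by have := mulr_ge0 c0 muq0; lra.
apply: hausdorff_q_le => //.
- exact: mulr_ge0.
- by move=> _ [y [yB _] <-]; exists y.
move=> _ [x xB <-]; exists (Fop mu Om (K lam) (fun s => trunc gam (x s))).
  by exists (fun s => trunc gam (x s)); first exact: Bp_trunc (lt_trans ltr01 p1) (ltW gam0) xB.
apply: Lpnorm_le_bound => // a Oa.
exact: Fop_trunc_close mOm finOm p1 gam0 M0 mK KM xB a Oa.
Qed.
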